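(* Let $0\le\beta<1$, let $C\in\mathbb{R}^{n\times n}$ be symmetric with $\|C\|=1$ and $\gamma\in\mathbb{R}$. Let $P^{(1)},\dots,P^{(K)}$ be real symmetric $n\times n$ matrices, each of one of the following forms: $\gamma\mathbb{1}-C$; $S-\frac{\operatorname{tr}S}{n}\mathbb{1}$ with $S$ diagonal, $S_{ii}=\operatorname{sgn}(\rho_{ii}-1/n)$ for some $\rho$; or $D/\|D\|$ with $D=\operatorname{diag}(\rho)-\mathbb{1}/n\neq 0$ for some $\rho$. Let $\Delta H^{(0)}=0$ and $\Delta H^{(k)}=P^{(k)}+\beta\Delta H^{(k-1)}$ for $k=1,\dots,K$ (the HU update matrices with momentum, with step lengths $\lambda_k=\frac{(1-\beta)^2}{2}\operatorname{tr}(\rho_{H^{(k-1)}}\Delta H^{(k)})$). Then $$\inf_{c\in\mathbb{R}}\|\Delta H^{(K)}-c\mathbb{1}\|\le\frac{1}{1-\beta}.$$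
   Context: $\|\cdot\|$ is the operator norm, $\operatorname{diag}(\rho)$ the diagonal matrix with the diagonal entries of $\rho$, $\operatorname{sgn}(0)=0$, and $\rho_H=e^{-H}/\operatorname{tr}e^{-H}$. In the HU routine with momentum, the update is $\Delta H^{(k)}=P^{(k)}+\frac{\beta}{\lambda_{k-1}}M^{(k-1)}$ with $M^{(k-1)}=\lambda_{k-1}\Delta H^{(k-1)}$, i.e. the recursion in the claim. *)

From HB Require Import structures.
From mathcomp Require Import all_boot all_order all_algebra.
From mathcomp Require Import all_classical all_reals.
Set Implicit Arguments. Unset Strict Implicit. Unset Printing Implicit Defensive.
Import Order.TTheory GRing.Theory Num.Theory.
Local Open Scope ring_scope.
Local Open Scope classical_set_scope.

Section Defs.
Variables (R : realType) (n : nat).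

Definition vnorm2 (x : 'cV[R]_n) : R := (x^T *m x) 0 0.

Definition opnorm (A : 'M[R]_n) : R :=
  sup [set Num.sqrt (vnorm2 (A *m x)) | x in [set x : 'cV[R]_n | vnorm2 x = 1]].

Definition diagpart (rho : 'M[R]_n) : 'M[R]_n :=
  \matrix_(i, j) (if i == j then rho i j else 0).

Definition form1 (gamma : R) (C P : 'M[R]_n) : Prop := P = gamma%:M - C.

Definition form2 (P : 'M[R]_n) : Prop :=
  exists rho : 'M[R]_n,
    let S : 'M[R]_n := \matrix_(i, j)
        (if i == j then Num.sg (rho i i - n%:R^-1) else 0) in
    P = S - (\tr S / n%:R)%:M.

Definition form3 (P : 'M[R]_n) : Prop :=
  exists rho : 'M[R]_n,
    let D := diagpart rho - (n%:R^-1)%:M in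
    D != 0 /\ P = (opnorm D)^-1 *: D.

Fixpoint DH (beta : R) (P : nat -> 'M[R]_n) (k : nat) : 'M[R]_n :=
  match k with
  | 0 => 0
  | k'.+1 => P k'.+1 + beta *: DH beta P k'
  end.

End Defs.

(* Every admissible direction P is within operator-norm distance 1 of a
   multiple of the identity: for [gamma 1 - C] take the scalar [gamma],
   the shifted sign matrix is diagonal with entries in {-1, 0, 1} up to a
   scalar, and [D / ||D||] has norm 1.  Distances to scalar matrices are
   subadditive and homogeneous, so the momentum recursion gives
   [dist (DH k) <= 1 + beta * dist (DH (k-1))], whose solution stays below
   the fixed point [1 / (1 - beta)]. *)

From HB Require Import structures.
From mathcomp Require Import all_boot all_order all_algebra.
From mathcomp Require Import all_classical all_reals.
From mathcomp Require Import ring lra.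
Import Order.TTheory GRing.Theory Num.Theory.
Local Open Scope ring_scope.
Local Open Scope classical_set_scope.

Set Implicit Arguments. Unset Strict Implicit.

Section EuclideanNorm.
Variables (R : realType) (n : nat).
Implicit Types x y : 'cV[R]_n.

Definition vnorm x : R := Num.sqrt (vnorm2 x).
Definition vdot x y : R := \sum_i x i 0 * y i 0.

Lemma vnorm2E x : vnorm2 x = \sum_i x i 0 ^+ 2.
Proof. by rewrite /vnorm2 mxE; apply: eq_bigr => i _; rewrite mxE expr2. Qed.

Lemma vnorm2_ge0 x : 0 <= vnorm2 x.
Proof. by rewrite vnorm2E; apply: sumr_ge0 => i _; apply: sqr_ge0. Qed.

Lemma vnorm_ge0 x : 0 <= vnorm x.
Proof. exact: sqrtr_ge0. Qed.

Lemma sqr_vnorm x : vnorm x ^+ 2 = vnorm2 x.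
Proof. by rewrite sqr_sqrtr // vnorm2_ge0. Qed.

Lemma vnorm_eq0_entry x : vnorm x = 0 -> forall i, x i 0 = 0.
Proof.
move=> x0 i; have : vnorm2 x = 0 by rewrite -sqr_vnorm x0 expr0n.
rewrite vnorm2E => /psumr_eq0P sum0.
by apply/eqP; rewrite -sqrf_eq0; apply/eqP/sum0 => // j _; apply: sqr_ge0.
Qed.

Lemma vdot_CauchySchwarz x y : vdot x y <= vnorm x * vnorm y.
Proof.
set a := vnorm x; set b := vnorm y.
have [a0|a0] := eqVneq a 0.
  by rewrite /vdot a0 mul0r big1 // => i _; rewrite (vnorm_eq0_entry a0) mul0r.
have [b0|b0] := eqVneq b 0.
  by rewrite /vdot b0 mulr0 big1 // => i _; rewrite (vnorm_eq0_entry b0) mulr0.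
have a_gt0 : 0 < a by rewrite lt0r a0 vnorm_ge0.
have b_gt0 : 0 < b by rewrite lt0r b0 vnorm_ge0.
(* Expand [0 <= || b x - a y ||^2]. *)
have sum_ge0 : 0 <= \sum_i (b * x i 0 - a * y i 0) ^+ 2.
  by apply: sumr_ge0 => i _; apply: sqr_ge0.
have expand : \sum_i (b * x i 0 - a * y i 0) ^+ 2 =
    b ^+ 2 * vnorm2 x - 2 * a * b * vdot x y + a ^+ 2 * vnorm2 y.
  rewrite !vnorm2E /vdot !mulr_sumr -!sumrB -big_split /=.
  by apply: eq_bigr => i _; ring.
rewrite expand -!sqr_vnorm -/a -/b in sum_ge0.
have : a * b * vdot x y <= a * b * (a * b) by nra.
by rewrite ler_pM2l ?mulr_gt0.
Qed.

Lemma vnormD x y : vnorm (x + y) <= vnorm x + vnorm y.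
Proof.
rewrite -[leRHS]ger0_norm ?addr_ge0 ?vnorm_ge0 // -sqrtr_sqr.
rewrite ler_sqrt ?sqr_ge0 // sqrrD !sqr_vnorm.
have -> : vnorm2 (x + y) = vnorm2 x + 2 * vdot x y + vnorm2 y.
  rewrite !vnorm2E /vdot mulr_sumr -!big_split /=.
  by apply: eq_bigr => i _; rewrite mxE; ring.
have := vdot_CauchySchwarz x y; lra.
Qed.

Lemma vnormZ (c : R) x : vnorm (c *: x) = `|c| * vnorm x.
Proof.
rewrite /vnorm -sqrtr_sqr -sqrtrM ?sqr_ge0 //; congr Num.sqrt.
by rewrite !vnorm2E mulr_sumr; apply: eq_bigr => i _; rewrite mxE; ring.
Qed.

End EuclideanNorm.

Section OperatorBound.
Variables (R : realType) (n : nat).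
Implicit Types (A B : 'M[R]_n) (M : R).

Definition op_bound A M : Prop :=
  forall x : 'cV[R]_n, vnorm2 x = 1 -> vnorm (A *m x) <= M.

Definition near_scalar A M : Prop := exists c : R, op_bound (A - c%:M) M.

Lemma opnorm_ge0 A : 0 <= opnorm A.
Proof.
rewrite /opnorm; set E := [set _ | _ in _].
have [supE|] := pselect (has_sup E); last by move/sup_out->.
have [[e Ee] _] := supE; apply: le_trans (sup_upper_bound supE Ee).
by case: Ee => z _ <-; apply: sqrtr_ge0.
Qed.

(* Without a supremum [opnorm A] is the junk value [0], hence the hypothesis. *)
Lemma op_bound_opnorm A : opnorm A != 0 -> op_bound A (opnorm A).
Proof.
rewrite /opnorm; set E := [set _ | _ in _] => A0 x x1.
have [supE|/sup_out E0] := pselect (has_sup E); last by rewrite E0 eqxx in A0.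
by apply: sup_upper_bound => //; exists x.
Qed.

Lemma opnorm_le A M : 0 <= M -> op_bound A M -> opnorm A <= M.
Proof.
move=> M_ge0 AM; rewrite /opnorm; set E := [set _ | _ in _].
have [[e Ee]|E0] := pselect (E !=set0).
  by apply: ge_sup; [exists e | move=> _ [z z1 <-]; apply: AM].
suff -> : E = set0 by rewrite sup0.
by apply/seteqP; split=> z // Ez; apply: E0; exists z.
Qed.

Lemma op_bound0 M : 0 <= M -> op_bound 0 M.
Proof.
by move=> M_ge0 x _; rewrite mul0mx -(scale0r (0 : 'cV_n)) vnormZ normr0 mul0r.
Qed.

Lemma op_boundD A B M N :
  op_bound A M -> op_bound B N -> op_bound (A + B) (M + N).
Proof.
move=> AM BN x x1; rewrite mulmxDl.
exact: le_trans (vnormD _ _) (lerD (AM x x1) (BN x x1)).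
Qed.

Lemma op_boundZ (c : R) A M : op_bound A M -> op_bound (c *: A) (`|c| * M).
Proof.
by move=> AM x x1; rewrite -scalemxAl vnormZ; apply: ler_wpM2l (AM x x1).
Qed.

Lemma op_bound_diag_mx (d : 'rV[R]_n) M :
  (forall i, `|d 0 i| <= M) -> op_bound (diag_mx d) M.
Proof.
move=> dM x x1; have M_ge0 : 0 <= M.
  case: (pickP 'I_n) => [i _|none]; first exact: le_trans (normr_ge0 _) (dM i).
  by move: x1; rewrite vnorm2E big_pred0 // => /eqP; rewrite eq_sym oner_eq0.
rewrite mul_diag_mx -[leRHS]ger0_norm // -sqrtr_sqr -[M ^+ 2]mulr1 -x1.
rewrite ler_sqrt ?mulr_ge0 ?sqr_ge0 ?vnorm2_ge0 // !vnorm2E mulr_sumr.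
apply: ler_sum => i _; rewrite mxE exprMn -real_normK ?num_real //.
by apply: ler_wpM2r; [apply: sqr_ge0 | rewrite lerXn2r ?nnegrE].
Qed.

Lemma near_scalarD A B M N :
  near_scalar A M -> near_scalar B N -> near_scalar (A + B) (M + N).
Proof.
move=> [a AM] [b BN]; exists (a + b).
by rewrite raddfD opprD addrACA; apply: op_boundD.
Qed.

Lemma near_scalarZ (c : R) A M :
  near_scalar A M -> near_scalar (c *: A) (`|c| * M).
Proof.
move=> [a AM]; exists (c * a).
by rewrite -scale_scalar_mx -scalerBr; apply: op_boundZ.
Qed.

End OperatorBound.

Section AdmissibleDirections.
Variables (R : realType) (n : nat).
Implicit Types (C P : 'M[R]_n).

Lemma form1_near_scalar (gamma : R) C P :
  opnorm C = 1 -> form1 gamma C P -> near_scalar P 1.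
Proof.
move=> C1 ->; exists gamma; rewrite addrAC subrr add0r -scaleN1r.
have := op_boundZ (-1) (op_bound_opnorm (A := C) _).
by rewrite C1 normrN1 mul1r; apply; rewrite oner_eq0.
Qed.

Lemma form2_near_scalar P : form2 P -> near_scalar P 1.
Proof.
case=> rho; set S := \matrix_(i, j) _ => ->; exists (- (\tr S / n%:R)).
rewrite raddfN opprK subrK.
have -> : S = diag_mx (\row_i Num.sg (rho i i - n%:R^-1)).
  apply/matrixP => i j; rewrite !mxE.
  by case: eqP => [->|]; rewrite ?mulr1n ?mulr0n.
apply: op_bound_diag_mx => i; rewrite mxE normr_sg.
by case: (_ != 0).
Qed.

Lemma form3_near_scalar P : form3 P -> near_scalar P 1.
Proof.
case=> rho [_ ->]; set D := _ - _; exists 0; rewrite raddf0 subr0.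
have [D0|D_neq0] := eqVneq (opnorm D) 0.
  by rewrite D0 invr0 scale0r; apply: op_bound0.
have := op_boundZ (opnorm D)^-1 (op_bound_opnorm D_neq0).
by rewrite ger0_norm ?invr_ge0 ?opnorm_ge0 // mulVf.
Qed.

End AdmissibleDirections.

Lemma near_scalar_DH (R : realType) (n K : nat) (beta : R)
    (P : nat -> 'M[R]_n) :
  0 <= beta -> beta < 1 ->
  (forall k, (1 <= k <= K)%N -> near_scalar (P k) 1) ->
  near_scalar (DH beta P K) (1 - beta)^-1.
Proof.
move=> beta_ge0 beta_lt1; have beta1 : 1 - beta != 0 by rewrite subr_eq0 gt_eqF.
elim: K => [_|K IH PK] /=.
  exists 0; rewrite raddf0 subr0.
  by apply: op_bound0; rewrite invr_ge0 subr_ge0 ltW.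
have DH_K : near_scalar (beta *: DH beta P K) (`|beta| * (1 - beta)^-1).
  by apply/near_scalarZ/IH => k /andP[k1 kK]; apply: PK; rewrite k1 ltnW.
have := near_scalarD (PK K.+1 (leqnn _)) DH_K.
by rewrite ger0_norm //; congr near_scalar; field.
Qed.

Theorem lemma3 (R : realType) (n K : nat) (beta gamma : R) (C : 'M[R]_n)
  (P : nat -> 'M[R]_n) :
  0 <= beta -> beta < 1 ->
  C^T = C -> opnorm C = 1 ->
  (forall k, (1 <= k <= K)%N ->
     (P k)^T = P k /\ (form1 gamma C (P k) \/ form2 (P k) \/ form3 (P k))) ->
  inf [set opnorm (DH beta P K - c%:M) | c in [set: R]] <= (1 - beta)^-1.
Proof.
move=> beta_ge0 beta_lt1 _ C1 admissible.
have [c DHc] : near_scalar (DH beta P K) (1 - beta)^-1.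
  apply: near_scalar_DH => // k /admissible [_ [P1|[P2|P3]]].
  - exact: form1_near_scalar C1 P1.
  - exact: form2_near_scalar.
  - exact: form3_near_scalar.
apply: le_trans (opnorm_le _ DHc); last by rewrite invr_ge0 subr_ge0 ltW.
apply: ge_inf; last by exists c.
by exists 0 => _ [z _ <-]; apply: opnorm_ge0.
Qed.
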